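(* Let $Q=\Diamond abcd$ be a convex quadrilateral with vertices $a,b,c,d$ in clockwise order, such that the diagonal $\overline{ac}$ is horizontal, $|ac|=1$, and $1$ is the diameter of $Q$. Let the smallest axis-parallel rectangle containing $Q$ have horizontal side length $1$ and vertical side length $W$ with $0<W\le 1$, with $a$ on its left side, $b$ on its top side, $c$ on its right side and $d$ on its bottom side. Let $r=\frac14\sqrt{1+4W^2}$ (the radius of the two congruent disks circumscribing the two halves of this rectangle cut by a vertical line through its center). Then $r<1.84\, r_{opt}(Q)$.
   Context: For a compact set $X\subset\mathbb{R}^2$, $r_{opt}(X)$ denotes the minimum $r$ such that two closed disks of radius $r$ have union containing $X$. *)

From HB Require Import structures.
From mathcomp Require Import all_boot all_order all_algebra.
From mathcomp Require Import classical_sets reals.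
Set Implicit Arguments. Unset Strict Implicit. Unset Printing Implicit Defensive.
Import Order.TTheory GRing.Theory Num.Theory.
Local Open Scope ring_scope.
Local Open Scope classical_set_scope.

Section Defs.
Variable R : realType.
Notation pt := (R * R)%type.

Definition dist (p q : pt) : R :=
  Num.sqrt ((p.1 - q.1) ^+ 2 + (p.2 - q.2) ^+ 2).

Definition cdisk (c : pt) (r : R) : set pt := [set p | dist p c <= r].

Definition two_disk_cover (X : set pt) (r : R) : Prop :=
  exists c1 c2 : pt, X `<=` cdisk c1 r `|` cdisk c2 r.

Definition r_opt (X : set pt) : R := inf [set r | two_disk_cover X r].

(* signed area (cross product) of (b - a, c - a); negative = clockwise turn *)
Definition orient (a b c : pt) : R :=
  (b.1 - a.1) * (c.2 - a.2) - (b.2 - a.2) * (c.1 - a.1).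

Definition convex_quad_cw (a b c d : pt) : Prop :=
  [/\ orient a b c < 0, orient b c d < 0, orient c d a < 0 & orient d a b < 0].

Definition quad (a b c d : pt) : set pt :=
  [set p | exists la lb lc ld : R,
     [/\ [/\ 0 <= la, 0 <= lb, 0 <= lc & 0 <= ld], la + lb + lc + ld = 1 &
         p = (la * a.1 + lb * b.1 + lc * c.1 + ld * d.1,
              la * a.2 + lb * b.2 + lc * c.2 + ld * d.2)]].

Definition diam (X : set pt) : R :=
  sup [set e | exists p q, [/\ X p, X q & e = dist p q]].

Definition bb_xmin (X : set pt) : R := inf [set p.1 | p in X].
Definition bb_xmax (X : set pt) : R := sup [set p.1 | p in X].
Definition bb_ymin (X : set pt) : R := inf [set p.2 | p in X].
Definition bb_ymax (X : set pt) : R := sup [set p.2 | p in X].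

End Defs.

From HB Require Import structures.
From mathcomp Require Import all_boot all_order all_algebra.
From mathcomp Require Import classical_sets reals.
From mathcomp Require Import ring lra.
Import Order.TTheory GRing.Theory Num.Theory.
Local Open Scope ring_scope.
Local Open Scope classical_set_scope.

(* Put a at the origin, so that c = (1, 0), b = (u, h1) and d = (v, -h2) with
   W = h1 + h2.  Two disks of radius r covering Q split the seven points a, b,
   c, d and the midpoints of ac, cd, ad into two groups, and two points of one
   group are at distance at most 2r.  If W <= 0.76, two of a, c and the
   midpoint of ac are grouped together, so 2r >= 1/2.  Otherwise either a, c or
   b, d are grouped together, or the grouping follows one of five patterns; in
   each of them a fixed convex combination of two squared in-group distances is
   at least (50/183)^2 (1 + 4 W^2) under the constraint |bd| <= 1 given by the
   diameter.  Hence r_opt(Q) >= (25/183) sqrt(1 + 4 W^2), and 1.84 * 25/183 > 1/4. *)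

Definition sqdist {R : numDomainType} (p q : R * R) : R :=
  (p.1 - q.1) ^+ 2 + (p.2 - q.2) ^+ 2.

Definition midpoint {R : numFieldType} (p q : R * R) : R * R :=
  ((p.1 + q.1) / 2, (p.2 + q.2) / 2).

Lemma bool_neq_cases {x y : bool} : x != y -> forall z, z = x \/ z = y.
Proof. by case: x; case: y => // _ []; auto. Qed.

Lemma norm_comb4_le {R : realDomainType} (la lb lc ld x1 x2 x3 x4 : R) :
  0 <= la -> 0 <= lb -> 0 <= lc -> 0 <= ld -> la + lb + lc + ld = 1 ->
  `|la * x1 + lb * x2 + lc * x3 + ld * x4| <= `|x1| + `|x2| + `|x3| + `|x4|.
Proof.
move=> la0 lb0 lc0 ld0 sum1.
have scale (l x : R) : 0 <= l -> l <= 1 -> `|l * x| <= `|x|.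
  by move=> l0 l1; rewrite normrM ger0_norm // ler_piMl.
have := scale la x1 la0 _; have := scale lb x2 lb0 _.
have := scale lc x3 lc0 _; have := scale ld x4 ld0 _.
have := ler_normD (la * x1 + lb * x2 + lc * x3) (ld * x4).
have := ler_normD (la * x1 + lb * x2) (lc * x3).
have := ler_normD (la * x1) (lb * x2).
lra.
Qed.

Section Plane.
Context {R : realType}.
Implicit Types (p q z : R * R) (r x : R).

Lemma sqrtr_le x r : 0 <= r -> (Num.sqrt x <= r) = (x <= r ^+ 2).
Proof. by move=> r0; rewrite -{1}(ger0_norm r0) -sqrtr_sqr ler_sqrt ?sqr_ge0. Qed.

Lemma mulr_sqrt_le (k x r : R) : 0 <= k -> 0 <= r ->
  k ^+ 2 * x <= r ^+ 2 -> k * Num.sqrt x <= r.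
Proof.
move=> k0 r0 le_kx_r; have [x0|/ltW x0] := leP 0 x; last by rewrite ler0_sqrtr // mulr0.
by rewrite -{1}(ger0_norm k0) -sqrtr_sqr -sqrtrM ?sqr_ge0 // sqrtr_le.
Qed.

Lemma dist_ge0 p q : 0 <= dist p q.
Proof. exact: sqrtr_ge0. Qed.

Lemma dist_le_sqdistE p q r : 0 <= r -> (dist p q <= r) = (sqdist p q <= r ^+ 2).
Proof. exact: sqrtr_le. Qed.

Lemma dist_le_l1 p q : dist p q <= `|p.1 - q.1| + `|p.2 - q.2|.
Proof.
rewrite dist_le_sqdistE ?addr_ge0 // /sqdist.
rewrite -(real_normK (num_real (p.1 - q.1))) -(real_normK (num_real (p.2 - q.2))).
have := mulr_ge0 (normr_ge0 (p.1 - q.1)) (normr_ge0 (p.2 - q.2)); lra.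
Qed.

Lemma cdisk_sqdist z r p q : cdisk z r p -> cdisk z r q -> sqdist p q <= 4 * r ^+ 2.
Proof.
rewrite /cdisk /= => pz qz; have r0 := le_trans (dist_ge0 p z) pz.
move: pz qz; rewrite !dist_le_sqdistE // /sqdist.
have := sqr_ge0 (p.1 + q.1 - 2 * z.1); have := sqr_ge0 (p.2 + q.2 - 2 * z.2).
lra.
Qed.

Lemma two_disk_cover_ge0 {X : set (R * R)} {r p} : X p -> two_disk_cover X r -> 0 <= r.
Proof. by move=> Xp [z1 [z2 /(_ p Xp) [] /(le_trans (dist_ge0 _ _))]]. Qed.

Lemma two_disk_cover_sides {X : set (R * R)} {r} : two_disk_cover X r ->
  exists side : R * R -> bool,
    forall p q, X p -> X q -> side p = side q -> sqdist p q <= 4 * r ^+ 2.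
Proof.
move=> [z1 [z2 cover]].
have in2 p : X p -> (dist p z1 <= r) = false -> cdisk z2 r p.
  by move=> Xp p1; case: (cover p Xp) => //; rewrite /cdisk /= p1.
exists (fun p => dist p z1 <= r) => p q Xp Xq /=.
case p1: (dist p z1 <= r); case q1: (dist q z1 <= r) => ? //.
- exact: cdisk_sqdist p1 q1.
- exact: cdisk_sqdist (in2 p Xp p1) (in2 q Xq q1).
Qed.

Section BoundedSet.
Context {X : set (R * R)} {M1 M2 : R}.
Hypothesis X_bounded : forall {p}, X p -> `|p.1| <= M1 /\ `|p.2| <= M2.

Let X_coord1 p : X p -> - M1 <= p.1 <= M1.
Proof. by move=> /X_bounded[]; rewrite ler_norml. Qed.

Lemma bb_xmin_le {p} : X p -> bb_xmin X <= p.1.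
Proof.
move=> Xp; apply: ge_inf; last by exists p.
by exists (- M1) => _ [q /X_coord1/andP[+ _] <-].
Qed.

Lemma bb_xmax_ge {p} : X p -> p.1 <= bb_xmax X.
Proof.
move=> Xp; apply: ub_le_sup; last by exists p.
by exists M1 => _ [q /X_coord1/andP[_ +] <-].
Qed.

Lemma dist_le_diam {p q} : X p -> X q -> dist p q <= diam X.
Proof.
move=> Xp Xq; apply: ub_le_sup; last by exists p, q.
exists (2 * (M1 + M2)) => _ [x [y [Xx Xy ->]]].
apply: le_trans (dist_le_l1 x y) _.
have [x1 x2] := X_bounded Xx; have [y1 y2] := X_bounded Xy.
have := ler_normB x.1 y.1; have := ler_normB x.2 y.2; lra.
Qed.

Lemma two_disk_cover_bounded : two_disk_cover X (M1 + M2).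
Proof.
exists (0, 0), (0, 0) => p Xp; left; apply: le_trans (dist_le_l1 _ _) _.
by have [] := X_bounded Xp; rewrite /= !subr0; lra.
Qed.

Lemma r_opt_ge {l} : (forall r, two_disk_cover X r -> l <= r) -> l <= r_opt X.
Proof. by move=> lb; apply: lb_le_inf => //; exists (M1 + M2); exact: two_disk_cover_bounded. Qed.

End BoundedSet.

Section Quadrilateral.
Variables a b c d : R * R.

Lemma in_quad la lb lc ld p :
  0 <= la -> 0 <= lb -> 0 <= lc -> 0 <= ld -> la + lb + lc + ld = 1 ->
  p.1 = la * a.1 + lb * b.1 + lc * c.1 + ld * d.1 ->
  p.2 = la * a.2 + lb * b.2 + lc * c.2 + ld * d.2 -> quad a b c d p.
Proof.
move=> la0 lb0 lc0 ld0 sum1 p1 p2; exists la, lb, lc, ld; split => //.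
by case: p p1 p2 => /= ? ? -> ->.
Qed.

Lemma quad_vertices :
  [/\ quad a b c d a, quad a b c d b, quad a b c d c & quad a b c d d].
Proof.
split; [apply: (in_quad 1 0 0 0) | apply: (in_quad 0 1 0 0)
       | apply: (in_quad 0 0 1 0) | apply: (in_quad 0 0 0 1)]; lra.
Qed.

Lemma quad_midpoint p q :
  quad a b c d p -> quad a b c d q -> quad a b c d (midpoint p q).
Proof.
move=> [la [lb [lc [ld [[? ? ? ?] ? ->]]]]] [ma [mb [mc [md [[? ? ? ?] ? ->]]]]].
apply: (in_quad ((la + ma) / 2) ((lb + mb) / 2) ((lc + mc) / 2) ((ld + md) / 2));
  rewrite /midpoint /=; lra.
Qed.

Lemma quad_bounded :
  exists M1 M2, forall p, quad a b c d p -> `|p.1| <= M1 /\ `|p.2| <= M2.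
Proof.
exists (`|a.1| + `|b.1| + `|c.1| + `|d.1|), (`|a.2| + `|b.2| + `|c.2| + `|d.2|).
by move=> _ [la [lb [lc [ld [[? ? ? ?] ? ->]]]]]; split; apply: norm_comb4_le.
Qed.

End Quadrilateral.

Lemma cw_quad_above_below {a b c d : R * R} : convex_quad_cw a b c d ->
  a.2 = c.2 -> a.1 < c.1 -> d.2 < a.2 < b.2.
Proof.
case; rewrite /orient => abc _ cda _ ac2 ac1; rewrite -ac2 subrr !mulr0 in abc cda.
apply/andP; split; nra.
Qed.

End Plane.

Section WidthBound.
Context {R : realFieldType} {a b c d : R * R} {X : set (R * R)}.
Hypotheses (c1 : c.1 = a.1 + 1) (c2 : c.2 = a.2).
Hypotheses (ab2 : a.2 <= b.2) (da2 : d.2 <= a.2).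
Hypotheses (Xa : X a) (Xb : X b) (Xc : X c) (Xd : X d).
Hypothesis X_midpoint : forall {p q}, X p -> X q -> X (midpoint p q).
Hypothesis X_box : forall {p}, X p -> a.1 <= p.1 <= c.1.
Hypothesis X_diam : forall {p q}, X p -> X q -> sqdist p q <= 1.

Local Notation W := (b.2 - d.2).
Local Notation bound := ((25 / 183) ^+ 2 * (1 + 4 * W ^+ 2)).
Local Notation m := (midpoint a c).
Local Notation e := (midpoint c d).
Local Notation f := (midpoint a d).
Local Notation u := (b.1 - a.1).
Local Notation v := (d.1 - a.1).
Local Notation h1 := (b.2 - a.2).
Local Notation h2 := (a.2 - d.2).

(* lra ignores section hypotheses and Let-bound facts: they are passed to it
   explicitly. *)
Let W_ge0 : 0 <= W. Proof. by move: ab2 da2; lra. Qed.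

Let W_le1 : W <= 1.
Proof. by have := X_diam Xb Xd; rewrite /sqdist; have := sqr_ge0 (b.1 - d.1); nra. Qed.

Lemma bound_le_sqdist_ac : 4 * bound <= sqdist a c.
Proof.
have W1 : 0 <= 1 - W by rewrite subr_ge0.
by have := mulr_ge0 W_ge0 W1; rewrite /sqdist c1 c2; lra.
Qed.

Lemma bound_le_sqdist_bd : 76 / 100 <= W -> 4 * bound <= sqdist b d.
Proof.
rewrite -subr_ge0 => W76; have := mulr_ge0 W76 W_ge0.
by rewrite /sqdist; have := sqr_ge0 (b.1 - d.1); lra.
Qed.

Lemma bound_le_quarter : W <= 76 / 100 -> 4 * bound <= 1 / 4.
Proof. by rewrite -subr_ge0 => W76; have := mulr_ge0 W76 W_ge0; lra. Qed.

Section Wide.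
Hypothesis W_ge : 76 / 100 <= W.

Let h1_ge0 : 0 <= h1. Proof. by rewrite subr_ge0. Qed.
Let h2_ge0 : 0 <= h2. Proof. by rewrite subr_ge0. Qed.
Let W76_ge0 : 0 <= W - 76 / 100. Proof. by rewrite subr_ge0. Qed.
Let W1_ge0 : 0 <= 1 - W. Proof. by rewrite subr_ge0. Qed.
Let u_ge0 : 0 <= u. Proof. by have /andP[+ _] := X_box Xb; rewrite subr_ge0. Qed.
Let u1_ge0 : 0 <= 1 - u. Proof. by have /andP[_] := X_box Xb; rewrite c1; lra. Qed.
Let v_ge0 : 0 <= v. Proof. by have /andP[+ _] := X_box Xd; rewrite subr_ge0. Qed.
Let v1_ge0 : 0 <= 1 - v. Proof. by have /andP[_] := X_box Xd; rewrite c1; lra. Qed.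

(* (u - v)^2 <= 1 - W^2 <= 1 - 0.76^2, and 0.65^2 > 1 - 0.76^2. *)
Let uv_sqr : (u - v) ^+ 2 <= 4224 / 10000.
Proof.
have -> : u - v = b.1 - d.1 by ring.
by move: W_ge (X_diam Xb Xd); rewrite /sqdist; have := sqr_ge0 (W - 76 / 100); lra.
Qed.
Let uv_ge0 : 0 <= 65 / 100 - (u - v).
Proof. by have := uv_sqr; have := sqr_ge0 (u - v - 65 / 100); lra. Qed.
Let vu_ge0 : 0 <= 65 / 100 + (u - v).
Proof. by have := uv_sqr; have := sqr_ge0 (u - v + 65 / 100); lra. Qed.

(* In each of the five bounds below, the squares and the products of the
   constraints listed in the proof form a Positivstellensatz certificate: the
   difference of the two sides is a nonnegative linear combination of them and
   of the constraints themselves. *)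

Local Ltac close_certificate :=
  move: h1_ge0 h2_ge0 W76_ge0 W1_ge0 u_ge0 u1_ge0 v_ge0 v1_ge0 uv_ge0 vu_ge0
    (X_diam Xb Xd);
  rewrite /sqdist /midpoint /= c1 c2; lra.

Lemma bound_le_ae_be : 4 * bound <= 55 / 100 * sqdist a e + 45 / 100 * sqdist b e.
Proof.
have := sqr_ge0 (1 - 163/100 * u + 41/50 * v - 41/100 * h1 - 8/25 * h2).
have := sqr_ge0 (u - 12/25 * v - 57/100 * h1 - 47/100 * h2).
have := sqr_ge0 (v - 37/100 * h1 + 1/20 * h2).
have := sqr_ge0 (h1 - 19/100 * h2).
have := mulr_ge0 h1_ge0 h1_ge0; have := mulr_ge0 h1_ge0 W1_ge0.
have := mulr_ge0 h1_ge0 v_ge0; have := mulr_ge0 h1_ge0 uv_ge0.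
have := mulr_ge0 h2_ge0 v_ge0; have := mulr_ge0 h2_ge0 uv_ge0.
have := mulr_ge0 W76_ge0 W1_ge0; have := mulr_ge0 W1_ge0 u1_ge0.
have := mulr_ge0 W1_ge0 v_ge0; have := mulr_ge0 W1_ge0 uv_ge0.
have := mulr_ge0 u_ge0 u1_ge0.
by close_certificate.
Qed.

Lemma bound_le_bf_cd : 4 * bound <= 7 / 10 * sqdist b f + 3 / 10 * sqdist c d.
Proof.
have := sqr_ge0 (1 + 1/25 * u - 69/100 * v - 12/25 * h1 - 1/2 * h2).
have := sqr_ge0 (u - 23/50 * v - 3/50 * h1 - 1/20 * h2).
have := sqr_ge0 (h1 - 19/50 * h2).
have := mulr_ge0 h1_ge0 h1_ge0; have := mulr_ge0 h1_ge0 W76_ge0.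
have := mulr_ge0 h1_ge0 u_ge0; have := mulr_ge0 h1_ge0 v1_ge0.
have := mulr_ge0 h1_ge0 vu_ge0; have := mulr_ge0 h2_ge0 W76_ge0.
have := mulr_ge0 h2_ge0 u1_ge0; have := mulr_ge0 h2_ge0 v1_ge0.
have := mulr_ge0 W76_ge0 W1_ge0; have := mulr_ge0 W76_ge0 u_ge0.
have := mulr_ge0 W76_ge0 v1_ge0; have := mulr_ge0 u_ge0 u1_ge0.
by close_certificate.
Qed.

Lemma bound_le_ab_cf : 4 * bound <= 3 / 10 * sqdist a b + 7 / 10 * sqdist c f.
Proof.
have := sqr_ge0 (1 - 9/50 * u - 71/100 * v - 33/100 * h1 - 29/100 * h2).
have := sqr_ge0 (u - 21/50 * v - 7/100 * h1 - 3/50 * h2).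
have := sqr_ge0 (h1 - 61/100 * h2).
have := mulr_ge0 h1_ge0 W1_ge0; have := mulr_ge0 h1_ge0 u1_ge0.
have := mulr_ge0 h1_ge0 v1_ge0; have := mulr_ge0 h1_ge0 vu_ge0.
have := mulr_ge0 h2_ge0 W1_ge0; have := mulr_ge0 h2_ge0 u_ge0.
have := mulr_ge0 h2_ge0 v1_ge0; have := mulr_ge0 W1_ge0 W1_ge0.
have := mulr_ge0 u_ge0 vu_ge0; have := mulr_ge0 u1_ge0 v1_ge0.
have := mulr_ge0 v1_ge0 v1_ge0.
by close_certificate.
Qed.

Lemma bound_le_ae_cb : 4 * bound <= 3 / 4 * sqdist a e + 1 / 4 * sqdist c b.
Proof.
have := sqr_ge0 (1 - 67/50 * u + 27/50 * v - 19/50 * h1 - 37/100 * h2).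
have := sqr_ge0 (u - 31/100 * v - 59/100 * h1 - 57/100 * h2).
have := sqr_ge0 (h1 - 19/25 * h2).
have := mulr_ge0 h1_ge0 h1_ge0; have := mulr_ge0 h1_ge0 W1_ge0.
have := mulr_ge0 h1_ge0 u_ge0; have := mulr_ge0 h1_ge0 v_ge0.
have := mulr_ge0 h2_ge0 W1_ge0; have := mulr_ge0 h2_ge0 v_ge0.
have := mulr_ge0 W1_ge0 W1_ge0; have := mulr_ge0 W1_ge0 v_ge0.
have := mulr_ge0 u_ge0 v_ge0; have := mulr_ge0 u1_ge0 uv_ge0.
have := mulr_ge0 v_ge0 v_ge0.
by close_certificate.
Qed.

Lemma bound_le_ad_be : 4 * bound <= 3 / 10 * sqdist a d + 7 / 10 * sqdist b e.
Proof.
have := sqr_ge0 (1 - 5/4 * u + 41/50 * v - 47/100 * h1 - 53/100 * h2).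
have := sqr_ge0 (u - 7/50 * v - 59/100 * h1 - 7/10 * h2).
have := sqr_ge0 (v - 7/50 * h1 - 3/50 * h2).
have := sqr_ge0 (h1 - 37/100 * h2); have := sqr_ge0 h2.
have := mulr_ge0 h1_ge0 h1_ge0; have := mulr_ge0 h1_ge0 W76_ge0.
have := mulr_ge0 h1_ge0 u1_ge0; have := mulr_ge0 h1_ge0 v_ge0.
have := mulr_ge0 h2_ge0 W76_ge0; have := mulr_ge0 h2_ge0 u1_ge0.
have := mulr_ge0 h2_ge0 v_ge0; have := mulr_ge0 W76_ge0 W1_ge0.
have := mulr_ge0 W76_ge0 u1_ge0; have := mulr_ge0 W76_ge0 v_ge0.
by close_certificate.
Qed.

End Wide.

Context {side : R * R -> bool} {r : R}.
Hypothesis same_side :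
  forall {p q}, X p -> X q -> side p = side q -> sqdist p q <= 4 * r ^+ 2.

Lemma bound_le_narrow : W <= 76 / 100 -> bound <= r ^+ 2.
Proof.
move=> W_le; suff [p [q [Xp Xq pq quarter]]] :
    exists p q, [/\ X p, X q, side p = side q & 1 / 4 <= sqdist p q].
  by have := same_side Xp Xq pq; have := bound_le_quarter W_le; lra.
have Xm := X_midpoint Xa Xc.
have [ac|/bool_neq_cases sides] := eqVneq (side a) (side c).
  by exists a, c; split=> //; rewrite /sqdist c1 c2; lra.
by case: (sides (side m)) => ?; [exists m, a | exists m, c];
  split=> //; rewrite /sqdist /midpoint /= c1 c2; lra.
Qed.

Lemma bound_le_wide : 76 / 100 <= W -> bound <= r ^+ 2.
Proof.
move=> W_ge; have Xe := X_midpoint Xc Xd; have Xf := X_midpoint Xa Xd.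
have [ac|/bool_neq_cases sides] := eqVneq (side a) (side c).
  by have := same_side Xa Xc ac; have := bound_le_sqdist_ac; lra.
have bd_bound : side b = side d -> bound <= r ^+ 2.
  by move=> /(same_side Xb Xd); have := bound_le_sqdist_bd W_ge; lra.
case: (sides (side b)) => [ba|bc]; case: (sides (side d)) => [da|dc].
- by apply: bd_bound; rewrite ba da.
- case: (sides (side e)) => [ea|ec].
    have := bound_le_ae_be W_ge; have := same_side Xa Xe (esym ea).
    by have := same_side Xb Xe (etrans ba (esym ea)); lra.
  case: (sides (side f)) => [fa|fc].
    have := bound_le_bf_cd W_ge; have := same_side Xc Xd (esym dc).
    by have := same_side Xb Xf (etrans ba (esym fa)); lra.
  have := bound_le_ab_cf W_ge; have := same_side Xa Xb (esym ba).
  by have := same_side Xc Xf (esym fc); lra.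
- case: (sides (side e)) => [ea|ec].
    have := bound_le_ae_cb W_ge; have := same_side Xa Xe (esym ea).
    by have := same_side Xc Xb (esym bc); lra.
  have := bound_le_ad_be W_ge; have := same_side Xa Xd (esym da).
  by have := same_side Xb Xe (etrans bc (esym ec)); lra.
- by apply: bd_bound; rewrite bc dc.
Qed.

Lemma bound_le_sqr_radius : bound <= r ^+ 2.
Proof. by have [/bound_le_narrow|/ltW/bound_le_wide] := lerP W (76 / 100). Qed.

End WidthBound.

Lemma quad_radius_ge {R : realType} (a b c d : R * R) r :
  convex_quad_cw a b c d -> c.1 = a.1 + 1 -> c.2 = a.2 ->
  (forall p, quad a b c d p -> a.1 <= p.1 <= c.1) ->
  (forall p q, quad a b c d p -> quad a b c d q -> sqdist p q <= 1) ->
  two_disk_cover (quad a b c d) r ->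
  25 / 183 * Num.sqrt (1 + 4 * (b.2 - d.2) ^+ 2) <= r.
Proof.
move=> cvx c1 c2 box diam cover.
have [Qa Qb Qc Qd] := quad_vertices a b c d.
have ac1 : a.1 < c.1 by rewrite c1 ltrDl ltr01.
have /andP[da2 ab2] := cw_quad_above_below cvx (esym c2) ac1.
have [side same_side] := two_disk_cover_sides cover.
apply: mulr_sqrt_le; [lra | exact: two_disk_cover_ge0 Qa cover |].
exact: (bound_le_sqr_radius c1 c2 (ltW ab2) (ltW da2) Qa Qb Qc Qd
          (quad_midpoint a b c d) box diam same_side).
Qed.

Theorem lemma7 (R : realType) (a b c d : R * R) (W : R) :
  convex_quad_cw a b c d ->
  a.2 = c.2 ->
  dist a c = 1 ->
  diam (quad a b c d) = 1 ->
  bb_xmin (quad a b c d) = a.1 ->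
  bb_ymax (quad a b c d) = b.2 ->
  bb_xmax (quad a b c d) = c.1 ->
  bb_ymin (quad a b c d) = d.2 ->
  bb_xmax (quad a b c d) - bb_xmin (quad a b c d) = 1 ->
  bb_ymax (quad a b c d) - bb_ymin (quad a b c d) = W ->
  0 < W -> W <= 1 ->
  Num.sqrt (1 + 4 * W ^+ 2) / 4 < (184%:R / 100%:R) * r_opt (quad a b c d).
Proof.
move=> cvx ac2 _ diam1 xmin ymax xmax ymin xw yw W_gt0 _.
have [M1 [M2 Q_bounded]] := quad_bounded a b c d.
have c1 : c.1 = a.1 + 1 by move: xw; rewrite xmax xmin; lra.
have box p : quad a b c d p -> a.1 <= p.1 <= c.1.
  by move=> Qp; rewrite -{1}xmin -xmax (bb_xmin_le Q_bounded Qp) (bb_xmax_ge Q_bounded Qp).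
have diam p q : quad a b c d p -> quad a b c d q -> sqdist p q <= 1.
  move=> Qp Qq; have := dist_le_diam Q_bounded Qp Qq.
  by rewrite diam1 dist_le_sqdistE // expr1n.
have cover_ge r : two_disk_cover (quad a b c d) r ->
    25 / 183 * Num.sqrt (1 + 4 * W ^+ 2) <= r.
  by rewrite -yw ymax ymin; exact: quad_radius_ge cvx c1 (esym ac2) box diam.
have := r_opt_ge Q_bounded cover_ge.
have : 0 < Num.sqrt (1 + 4 * W ^+ 2) by rewrite sqrtr_gt0; nra.
lra.
Qed.
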